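(* Let $S$ be a symmetric numerical semigroup. Then $\#I(S)=\#T(S)$.
   Context: A numerical semigroup is a subset $S\subseteq\mathbb{N}$ (nonnegative integers) containing $0$, closed under addition, with $\mathbb{N}\setminus S$ finite. $F(S)$ is the Frobenius number, the largest integer not in $S$. $S$ is symmetric if $F(S)-x\in S$ for all $x\in\mathbb{Z}\setminus S$. An isolated gap of $S$ is an element $x\in\mathbb{N}\setminus S$ with $x-1,x+1\in S$; $I(S)$ is the set of isolated gaps. $N(S)=\{s\in S: s<F(S)\}$ and $T(S)=\{s\in N(S): s-1\notin S \text{ and } s+1\notin S\}$. *)

From mathcomp Require Import all_boot all_order all_algebra.
Set Implicit Arguments. Unset Strict Implicit. Unset Printing Implicit Defensive.
Import Order.TTheory GRing.Theory Num.Theory.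

Definition numerical_semigroup (S : pred nat) : Prop :=
  [/\ S 0%N, (forall a b, S a -> S b -> S (a + b)%N)
    & exists N : nat, forall n, (N <= n)%N -> S n].

Definition inZ (S : pred nat) (x : int) : bool :=
  match x with Posz n => S n | Negz _ => false end.

(* F is the Frobenius number of S: the largest integer not in S
   (F = -1 when S = N, the standard convention). *)
Definition is_frobenius (S : pred nat) (F : int) : Prop :=
  ~~ inZ S F /\ (forall x : int, (F < x)%R -> inZ S x).

Definition symmetric_ns (S : pred nat) (F : int) : Prop :=
  forall x : int, ~~ inZ S x -> inZ S (F - x)%R.

Definition isolated_gap (S : pred nat) (x : nat) : bool :=
  [&& ~~ S x, inZ S (x%:Z - 1)%R & S x.+1].

Definition in_T (S : pred nat) (F : int) (s : nat) : bool :=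
  [&& S s, (s%:Z < F)%R, ~~ inZ S (s%:Z - 1)%R & ~~ S s.+1].

From mathcomp Require Import all_boot all_order all_algebra.
Import Order.TTheory GRing.Theory Num.Theory.

Set Implicit Arguments.
Unset Strict Implicit.
Unset Printing Implicit Defensive.

(* Symmetry says that x |-> F - x exchanges S and its complement on [0, F].
   Reflecting the pattern (gap, x - 1 in S, x + 1 in S) of an isolated gap x
   therefore gives the pattern (s in S, s + 1 gap, s - 1 gap) of s = F - x,
   so x |-> F - x is a bijection from I(S) onto T(S). *)

Lemma count_iota_cut (P : pred nat) n N : n <= N -> {in P, forall x, x < n} ->
  count P (iota 0 N) = count P (iota 0 n).
Proof.
move=> le_nN Plt; rewrite -(subnKC le_nN) iotaD count_cat -[RHS]addn0; congr (_ + _).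
apply/eqP; rewrite -leqn0 leqNgt -has_count; apply/hasPn => x.
by rewrite mem_iota add0n => /andP[le_nx _]; apply/negP => /Plt; rewrite ltnNge le_nx.
Qed.

Lemma count_iota_rev (P : pred nat) n :
  count P (iota 0 n.+1) = count (fun i => P (n - i)) (iota 0 n.+1).
Proof.
have sum_iota Q : count Q (iota 0 n.+1) = \sum_(0 <= i < n.+1 | Q i) 1.
  by rewrite sum1_count /index_iota subn0.
by rewrite !sum_iota big_nat_rev.
Qed.

Lemma inZ_subn1 (S : pred nat) (x : nat) : inZ S (x%:Z - 1)%R = (0 < x) && S x.-1.
Proof. by case: x => [|x] //; rewrite intS addrC addKr. Qed.

Section SymmetricSemigroup.

Variables (S : pred nat) (f : nat).
Hypothesis S_add : forall a b, S a -> S b -> S (a + b).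
Hypothesis S_frob : ~~ S f.
Hypothesis S_gt_frob : forall x, f < x -> S x.
Hypothesis S_sym : forall x, x <= f -> ~~ S x -> S (f - x).

Lemma mem_sub_frob x : x <= f -> S (f - x) = ~~ S x.
Proof.
move=> le_xf; case Sx: (S x); last exact: S_sym (negbT Sx).
by apply/negP => Sfx; move: S_frob; rewrite -(subnKC le_xf) S_add.
Qed.

Lemma isolated_gap_le_frob x : isolated_gap S x -> x <= f.
Proof. by case/andP=> nSx _; rewrite leqNgt; apply: contra nSx; apply: S_gt_frob. Qed.

Lemma in_T_lt_frob s : in_T S f s -> s < f.
Proof. by case/and4P=> _; rewrite ltz_nat. Qed.

Lemma isolated_gap_sub_frob s : s <= f -> isolated_gap S (f - s) = in_T S f s.
Proof.
move=> le_sf; rewrite /isolated_gap /in_T !inZ_subn1 ltz_nat mem_sub_frob // negbK.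
have [-> | ne_sf] := eqVneq s f; first by rewrite (negbTE S_frob).
have lt_sf : s < f by rewrite ltn_neqAle ne_sf.
rewrite subn_gt0 lt_sf -subnS mem_sub_frob //.
case: s {le_sf ne_sf} lt_sf => [|s] lt_sf; first by rewrite subn0 (S_gt_frob (ltnSn f)) andbT.
by rewrite subnSK ?(ltnW lt_sf) // mem_sub_frob ?(ltnW (ltnW lt_sf)) //= [~~ S s && _]andbC.
Qed.

End SymmetricSemigroup.

Theorem proposition3p1 (S : pred nat) (F : int) (N : nat) :
  numerical_semigroup S -> is_frobenius S F -> symmetric_ns S F ->
  (forall n, (N <= n)%N -> S n) ->
  count (isolated_gap S) (iota 0 N) = count (in_T S F) (iota 0 N).
Proof.
move=> [_ S_add _] [S_frob S_gt_frob] S_sym S_ge_N.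
case: F S_frob S_gt_frob S_sym => [f|k] /= S_frob S_gt_frob S_sym; last first.
  have S_all x : S x by apply: (S_gt_frob (Posz x)).
  rewrite (@eq_count _ _ pred0) => [|x]; last by rewrite /isolated_gap S_all.
  by rewrite (@eq_count _ (in_T S _) pred0) // => x; rewrite /in_T andbF.
have {}S_gt_frob x : f < x -> S x by move=> lt_fx; apply: (S_gt_frob x); rewrite ltz_nat.
have {}S_sym x : x <= f -> ~~ S x -> S (f - x).
  by move=> le_xf /(S_sym x); rewrite subzn.
have lt_fN : f < N by rewrite ltnNge; apply: contra S_frob; apply: S_ge_N.
rewrite (@count_iota_cut _ f.+1) // => [|x /(isolated_gap_le_frob S_gt_frob)//].
rewrite [RHS](@count_iota_cut _ f.+1) // => [|s /in_T_lt_frob /ltnW//].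
rewrite count_iota_rev; apply: eq_in_count => s; rewrite mem_iota ltnS => /andP[_ le_sf].
exact: isolated_gap_sub_frob.
Qed.
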